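(* Let $(A,\cdot,\alpha)$ be a Hom-Malcev algebra over a field $\mathbb{K}$ of characteristic $0$, and define for $w,x,y,z\in A$ $$G(w,x,y,z)=J_{\alpha}(w\cdot x,\alpha(y),\alpha(z))-\alpha^{2}(x)\cdot J_{\alpha}(w,y,z)-J_{\alpha}(x,y,z)\cdot\alpha^{2}(w).$$ Then for all $w,x,y,z\in A$: (1) $J_{\alpha}(w\cdot x,\alpha(y),\alpha(z))+J_{\alpha}(x\cdot y,\alpha(z),\alpha(w))+J_{\alpha}(y\cdot z,\alpha(w),\alpha(x))+J_{\alpha}(z\cdot w,\alpha(x),\alpha(y))=0$; (2) $2G(w,x,y,z)-\alpha^{2}(w)\cdot J_{\alpha}(x,y,z)+\alpha^{2}(x)\cdot J_{\alpha}(w,y,z)-\alpha^{2}(y)\cdot J_{\alpha}(z,w,x)+\alpha^{2}(z)\cdot J_{\alpha}(w,x,y)=J_{\alpha}(w\cdot x,\alpha(y),\alpha(z))+J_{\alpha}(y\cdot z,\alpha(w),\alpha(x))$.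
   Context: A multiplicative Hom-algebra is a triple $(A,\cdot,\alpha)$ with $A$ a vector space over $\mathbb{K}$, $\cdot$ bilinear, and $\alpha$ linear with $\alpha(x\cdot y)=\alpha(x)\cdot\alpha(y)$; anticommutative means $x\cdot y=-y\cdot x$. The Hom-Jacobian is $J_{\alpha}(x,y,z)=(x\cdot y)\cdot\alpha(z)+(y\cdot z)\cdot\alpha(x)+(z\cdot x)\cdot\alpha(y)$. A Hom-Malcev algebra is an anticommutative multiplicative Hom-algebra satisfying $J_{\alpha}(\alpha(x),\alpha(y),x\cdot z)=J_{\alpha}(x,y,z)\cdot\alpha^{2}(x)$ for all $x,y,z\in A$. *)

From mathcomp Require Import all_boot all_algebra.
Set Implicit Arguments. Unset Strict Implicit. Unset Printing Implicit Defensive.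
Import GRing.Theory.
Local Open Scope ring_scope.

Definition bilinear_prod (F : fieldType) (V : lmodType F) (mul : V -> V -> V) :=
  (forall (a : F) (x y z : V), mul (a *: x + y) z = a *: mul x z + mul y z) /\
  (forall (a : F) (x y z : V), mul x (a *: y + z) = a *: mul x y + mul x z).

Definition multiplicative (V : Type) (mul : V -> V -> V) (alpha : V -> V) :=
  forall x y, alpha (mul x y) = mul (alpha x) (alpha y).

Definition anticommutative (V : zmodType) (mul : V -> V -> V) :=
  forall x y, mul x y = - mul y x.

Definition homJ (V : zmodType) (mul : V -> V -> V) (alpha : V -> V) (x y z : V) :=
  mul (mul x y) (alpha z) + mul (mul y z) (alpha x) + mul (mul z x) (alpha y).

Definition hom_malcev (F : fieldType) (V : lmodType F)
  (mul : V -> V -> V) (alpha : {linear V -> V}) :=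
  [/\ bilinear_prod mul, multiplicative mul alpha, anticommutative mul &
      forall x y z : V,
        homJ mul alpha (alpha x) (alpha y) (mul x z) =
        mul (homJ mul alpha x y z) (alpha (alpha x))].

Definition homG (V : zmodType) (mul : V -> V -> V) (alpha : V -> V) (w x y z : V) :=
  homJ mul alpha (mul w x) (alpha y) (alpha z)
  - mul (alpha (alpha x)) (homJ mul alpha w y z)
  - mul (homJ mul alpha x y z) (alpha (alpha w)).

From mathcomp Require Import all_boot all_algebra.
Import GRing.Theory.
Local Open Scope ring_scope.

(* Anticommutativity makes the Hom-Jacobian J alternating, so that
   f(w, x; y, z) := J(w x, alpha y, alpha z) is alternating in (w, x) and in
   (y, z).  Polarizing the Hom-Malcev identity, written as
   f(x, z; x, y) = J(x, y, z) alpha^2(x), gives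
     f(x, z; w, y) + f(w, z; x, y) = J(w, y, z) alpha^2(x) + J(x, y, z) alpha^2(w).
   The sum of the instances (w, y, x, z) and (w, y, z, x) of this identity has a
   vanishing right-hand side, which is (1); the difference of the instances
   (w, y, z, x) and (x, z, w, y) eliminates f(x, y; w, z), which is (2). *)

Section HomMalcevIdentities.

Variables (F : fieldType) (V : lmodType F).
Variables (mul : V -> V -> V) (alpha : {linear V -> V}).
Hypotheses (mul_bilinear : bilinear_prod mul) (mul_anti : anticommutative mul).
Hypothesis malcev : forall x y z : V,
  homJ mul alpha (alpha x) (alpha y) (mul x z) =
  mul (homJ mul alpha x y z) (alpha (alpha x)).

Local Notation J := (homJ mul alpha).
Local Notation a2 v := (alpha (alpha v)).

Lemma mulDl x y z : mul (x + y) z = mul x z + mul y z.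
Proof. by have := mul_bilinear.1 1 x y z; rewrite !scale1r. Qed.

Lemma mulDr x y z : mul x (y + z) = mul x y + mul x z.
Proof. by have := mul_bilinear.2 1 x y z; rewrite !scale1r. Qed.

Lemma mul0l z : mul 0 z = 0.
Proof. by apply: (addrI (mul 0 z)); rewrite -mulDl !addr0. Qed.

Lemma mulNl x z : mul (- x) z = - mul x z.
Proof. by apply/eqP; rewrite -addr_eq0 -mulDl addNr mul0l. Qed.

Lemma mulNr x z : mul z (- x) = - mul z x.
Proof. by rewrite [LHS]mul_anti mulNl opprK mul_anti. Qed.

Lemma homJ_rotate x y z : J x y z = J y z x.
Proof. by rewrite /homJ -addrA addrC. Qed.

Lemma homJ_swapl x y z : J y x z = - J x y z.
Proof.
rewrite /homJ (mul_anti y x) (mul_anti x z) (mul_anti z y) !mulNl !opprD.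
by rewrite addrAC.
Qed.

Lemma homJ_swapr x y z : J x z y = - J x y z.
Proof. by rewrite homJ_rotate homJ_swapl -homJ_rotate. Qed.

Lemma homJNl a b c : J (- a) b c = - J a b c.
Proof. by rewrite /homJ raddfN !(mulNl, mulNr) !opprD. Qed.

Lemma homJ_mulC p q r s : J (mul q p) r s = - J (mul p q) r s.
Proof. by rewrite mul_anti homJNl. Qed.

Lemma homJDl a b c d : J (a + b) c d = J a c d + J b c d.
Proof.
rewrite /homJ raddfD !(mulDl, mulDr).
by rewrite [RHS](AC (3*3) ((1*4)*(2*5)*(3*6))).
Qed.

Lemma homJDr a b c d : J a b (c + d) = J a b c + J a b d.
Proof.
by rewrite -[LHS]homJ_rotate homJDl (homJ_rotate c) (homJ_rotate d).
Qed.

Lemma homJ_malcev_lin w x y z :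
  J (mul x z) (alpha w) (alpha y) + J (mul w z) (alpha x) (alpha y) =
  mul (J w y z) (a2 x) + mul (J x y z) (a2 w).
Proof.
have := malcev (w + x) y z.
rewrite !raddfD mulDl !homJDl !homJDr mulDl !mulDr !malcev.
rewrite [LHS](AC (2*2) ((1*4)*(2*3))) [RHS](AC (2*2) ((1*4)*(2*3))) => /addrI.
by rewrite (homJ_rotate (mul x z)) (homJ_rotate (mul w z)).
Qed.

Lemma homJ_mul_cyclic_sum w x y z :
  J (mul w x) (alpha y) (alpha z) + J (mul x y) (alpha z) (alpha w)
  + J (mul y z) (alpha w) (alpha x) + J (mul z w) (alpha x) (alpha y) = 0.
Proof.
have lin_wyxz : J (mul y z) (alpha w) (alpha x) + J (mul z w) (alpha x) (alpha y)
    = mul (J w x z) (a2 y) + mul (J y x z) (a2 w).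
  have := homJ_malcev_lin w y x z.
  by rewrite (homJ_mulC z w) (homJ_swapr (mul z w)) opprK.
have lin_wyzx : J (mul x y) (alpha z) (alpha w) + J (mul w x) (alpha y) (alpha z)
    = - mul (J w x z) (a2 y) - mul (J y x z) (a2 w).
  have := homJ_malcev_lin w y z x.
  rewrite (homJ_mulC x y) (homJ_swapr (mul x y)) opprK.
  by rewrite (homJ_swapr w) (homJ_swapr y) !mulNl.
rewrite -addrA (addrC (J (mul w x) _ _)) lin_wyxz lin_wyzx.
by rewrite -opprD addNr.
Qed.

Lemma homG_mul2n w x y z :
  homG mul alpha w x y z *+ 2 - mul (a2 w) (J x y z) + mul (a2 x) (J w y z)
    - mul (a2 y) (J z w x) + mul (a2 z) (J w x y)
  = J (mul w x) (alpha y) (alpha z) + J (mul y z) (alpha w) (alpha x).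
Proof.
have lin_wyzx : - J (mul x y) (alpha w) (alpha z) + J (mul w x) (alpha y) (alpha z)
    = - mul (J w x z) (a2 y) + mul (J x y z) (a2 w).
  have := homJ_malcev_lin w y z x.
  by rewrite (homJ_mulC x y) (homJ_swapr w) -(homJ_rotate x y z) mulNl.
have lin_xzwy : J (mul y z) (alpha w) (alpha x) - J (mul x y) (alpha w) (alpha z)
    = - mul (J w x y) (a2 z) + mul (J w y z) (a2 x).
  have := homJ_malcev_lin x z w y.
  rewrite (homJ_mulC y z) (homJ_swapr (mul y z)) opprK (homJ_swapr (mul x y)).
  by rewrite (homJ_swapl w x y) (homJ_rotate z w y) mulNl.
rewrite /homG (mul_anti (a2 x)) (mul_anti (a2 w)) (mul_anti (a2 y)).
rewrite (mul_anti (a2 z)) (homJ_rotate z w x) !opprK mulr2n.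
rewrite -[_ + _ + mul (J x y z) (a2 w)]addrA subrK.
rewrite -[_ + _ - mul (J w y z) (a2 x)]addrA addrK.
rewrite [LHS](AC 4 (2*(1*(3*4)))); congr (_ + _).
rewrite -(addNKr (J (mul x y) (alpha w) (alpha z)) (J (mul w x) _ _)) lin_wyzx.
rewrite -(subrK (J (mul x y) (alpha w) (alpha z)) (J (mul y z) _ _)) lin_xzwy.
rewrite [LHS](AC (1*2*1*1*2) ((7*4*1)*((2*6)*(3*5)))).
by rewrite /= addNr addrN !addr0.
Qed.

End HomMalcevIdentities.

Theorem lemma2p6 (F : fieldType) (V : lmodType F)
  (mul : V -> V -> V) (alpha : {linear V -> V}) :
  [pchar F] =i pred0 ->
  hom_malcev mul alpha ->
  forall w x y z : V,
    let J := homJ mul alpha in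
    let a2 := fun v => alpha (alpha v) in
    J (mul w x) (alpha y) (alpha z) + J (mul x y) (alpha z) (alpha w)
      + J (mul y z) (alpha w) (alpha x) + J (mul z w) (alpha x) (alpha y) = 0
    /\
    homG mul alpha w x y z *+ 2 - mul (a2 w) (J x y z) + mul (a2 x) (J w y z)
      - mul (a2 y) (J z w x) + mul (a2 z) (J w x y)
    = J (mul w x) (alpha y) (alpha z) + J (mul y z) (alpha w) (alpha x).
Proof.
move=> _ [mul_bilinear _ mul_anti malcev] w x y z J a2; split.
  exact: homJ_mul_cyclic_sum.
exact: homG_mul2n.
Qed.
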